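(* Let $X$ be a quandle, let $s=(x_1,\dots,x_n)\in X^n$, and let $1\le\alpha<\beta\le n$ with $x_\alpha=x_\beta$. Then the image in $S_n$ of the stabilizer of $s$ in $B_n$ contains the transposition $(\alpha\ \beta)$.
   Context: A quandle is a set $X$ with an operation $x^y$ such that $x\mapsto x^y$ is bijective for each $y$, $(z^x)^y=(z^y)^{x^y}$, and $x^x=x$. $B_n$ acts on $X^n$ from the right by $(\dots,x_i,x_{i+1},\dots)^{\sigma_i}=(\dots,x_{i+1},x_i^{x_{i+1}},\dots)$, and $B_n\to S_n$ sends $\sigma_i\mapsto(i\ i+1)$. *)

From mathcomp Require Import all_boot all_fingroup.
Set Implicit Arguments. Unset Strict Implicit. Unset Printing Implicit Defensive.

(* A quandle structure on X with operation x^y = op x y. *)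
Definition is_quandle (X : Type) (op : X -> X -> X) : Prop :=
  [/\ (forall y, bijective (fun x => op x y)),
      (forall x y z, op (op z x) y = op (op z y) (op x y)) &
      (forall x, op x x = x)].

(* A generator sigma_i^{+1} (bg_sign = true) or sigma_i^{-1} (bg_sign = false)
   of B_n, with i, i+1 positions in 'I_n (0-indexed). *)
Record bgen (n : nat) := BGen {
  bg_pos : 'I_n;
  bg_lt : (bg_pos.+1 < n)%N;
  bg_sign : bool }.

Definition bg_next n (g : bgen n) : 'I_n := Ordinal (bg_lt g).

Definition sigma_act (X : Type) (op : X -> X -> X) n (g : bgen n)
  (s : 'I_n -> X) : 'I_n -> X :=
  fun k => if k == bg_pos g then s (bg_next g)
           else if k == bg_next g then op (s (bg_pos g)) (s (bg_next g))
           else s k.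

(* braid_act op w s t : the braid represented by the word w sends s to t
   (the word is read left to right, right action: s^(g w) = (s^g)^w).
   sigma_i^{-1} sends s to the unique u with u^{sigma_i} = s. *)
Fixpoint braid_act (X : Type) (op : X -> X -> X) n (w : seq (bgen n))
  (s t : 'I_n -> X) : Prop :=
  match w with
  | [::] => s = t
  | g :: w' =>
      if bg_sign g then braid_act op w' (sigma_act op g s) t
      else exists u, sigma_act op g u = s /\ braid_act op w' u t
  end.

Definition braid_perm n (w : seq (bgen n)) : {perm 'I_n} :=
  foldr (fun g p => (tperm (bg_pos g) (bg_next g) * p)%g) 1%g w.

From mathcomp Require Import all_boot all_fingroup.
From Stdlib Require Import FunctionalExtensionality.
Set Implicit Arguments. Unset Strict Implicit. Unset Printing Implicit Defensive.

(* Induction on b - a.  If s_a = s_(a+1), then sigma_a fixes s because x^x = x.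
   Otherwise let u = s^(sigma_a^-1), which exists since every x |-> x^y is onto;
   u carries s_a at position a+1 and agrees with s at b, so by induction some
   braid w fixes u with image (a+1 b).  Then sigma_a^-1 w sigma_a fixes s and
   its image is (a+1 b) conjugated by (a a+1), that is (a b). *)

Definition stab_perm (X : Type) (op : X -> X -> X) n (s : 'I_n -> X)
  (p : {perm 'I_n}) : Prop :=
  exists w : seq (bgen n), braid_act op w s s /\ braid_perm w = p.

Section BraidWords.

Variables (X : Type) (op : X -> X -> X) (n : nat).

Lemma braid_act_cat (w1 w2 : seq (bgen n)) s u t :
  braid_act op w1 s u -> braid_act op w2 u t -> braid_act op (w1 ++ w2) s t.
Proof.
elim: w1 s => [|g w IH] s /=; first by move=> ->.
case: (bg_sign g) => [H1 H2|[v [Hv H1]] H2]; first exact: IH H1 H2.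
by exists v; split; last exact: IH H1 H2.
Qed.

Lemma braid_perm_cat (w1 w2 : seq (bgen n)) :
  braid_perm (w1 ++ w2) = (braid_perm w1 * braid_perm w2)%g.
Proof. by elim: w1 => [|g w IH] /=; [rewrite mul1g | rewrite IH mulgA]. Qed.

Lemma bg_next_neq (g : bgen n) : bg_next g != bg_pos g.
Proof. by rewrite -val_eqE /= gtn_eqF. Qed.

Lemma stab_perm_conj (g : bgen n) (s u : 'I_n -> X) p :
  sigma_act op g u = s -> stab_perm op u p ->
  stab_perm op s (p ^ tperm (bg_pos g) (bg_next g))%g.
Proof.
move=> Eu [w [Hw Hp]].
exists (BGen (bg_lt g) false :: w ++ [:: BGen (bg_lt g) true]); split.
  by exists u; split; last exact: braid_act_cat Hw _.
by rewrite /= braid_perm_cat Hp /= mulg1 /conjg tpermV.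
Qed.

Lemma stab_perm_adj (g : bgen n) (s : 'I_n -> X) :
  (forall x, op x x = x) -> s (bg_pos g) = s (bg_next g) ->
  stab_perm op s (tperm (bg_pos g) (bg_next g)).
Proof.
move=> opxx Es; exists [:: BGen (bg_lt g) true]; split; last by rewrite /= mulg1.
apply: functional_extensionality => k /=; rewrite /sigma_act /=.
case: eqP => [->|_]; first by rewrite Es.
by case: eqP => [->|_] //; rewrite -Es opxx.
Qed.

Lemma sigma_act_preimage (g : bgen n) (s : 'I_n -> X) :
  (forall y, bijective (op^~ y)) ->
  exists u, [/\ sigma_act op g u = s, u (bg_next g) = s (bg_pos g)
              & forall k, k != bg_pos g -> k != bg_next g -> u k = s k].
Proof.
move=> opbij; have [inv _ invK] := opbij (s (bg_pos g)).
pose u k := if k == bg_pos g then inv (s (bg_next g))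
            else if k == bg_next g then s (bg_pos g) else s k.
have Eu_next : u (bg_next g) = s (bg_pos g) by rewrite /u (negbTE (bg_next_neq g)) eqxx.
exists u; split=> //; last by move=> k /negbTE nk /negbTE nk1; rewrite /u nk nk1.
apply: functional_extensionality => k; rewrite /sigma_act.
case: eqP => [->|/eqP nk]; first exact: Eu_next.
case: eqP => [->|/eqP nk1]; first by rewrite Eu_next /u eqxx invK.
by rewrite /u (negbTE nk) (negbTE nk1).
Qed.

End BraidWords.

Lemma stab_perm_tperm (X : Type) (op : X -> X -> X) (n : nat)
    (s : 'I_n -> X) (a b : 'I_n) :
  is_quandle op -> (a < b)%N -> s a = s b -> stab_perm op s (tperm a b).
Proof.
case=> opbij _ opxx ab.
have [d] : exists d, val b = (a + d.+1)%N by exists (b - a.+1)%N; rewrite addnS -addSn subnKC.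
elim: d s a {ab} => [|d IH] s a Eb Es.
  have lt : (a.+1 < n)%N by rewrite -[a.+1]addn1 -Eb ltn_ord.
  have Eb1 : Ordinal lt = b by apply: val_inj; rewrite /= Eb addn1.
  by rewrite -Eb1 in Es *; exact: (@stab_perm_adj _ _ _ (BGen lt true) _ opxx Es).
have lt : (a.+1 < n)%N by rewrite (leq_trans _ (ltn_ord b)) // Eb addnS ltnS leq_addr.
pose g := BGen lt true; pose a1 := bg_next g.
have nab : a != b by rewrite -val_eqE /= Eb ltn_eqF // addnS ltnS leq_addr.
have na1b : a1 != b by rewrite -val_eqE /= Eb addnS -addSn ltn_eqF // -addn1 leq_add2l.
have [u [Eu Eu_a1 Eu_b]] := sigma_act_preimage g s opbij.
have : stab_perm op u (tperm a1 b).
  apply: IH; first by rewrite /= Eb addnS.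
  by rewrite Eu_a1 Eu_b // eq_sym.
by move/(stab_perm_conj Eu); rewrite /= /a1 (tpermC a) tpermJ_tperm.
Qed.

Theorem lemma4p34 (X : Type) (op : X -> X -> X) (hX : is_quandle op)
  (n : nat) (s : 'I_n -> X) (a b : 'I_n) :
  (a < b)%N -> s a = s b ->
  exists w : seq (bgen n), braid_act op w s s /\ braid_perm w = tperm a b.
Proof. exact: stab_perm_tperm. Qed.
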